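(* Let $N\ge 2$ and let $G$ be a bulkless graph on boundary vertices $v_1,\ldots,v_N$ which solves the DBRP for some contiguous entropy data $S$ on $N$ cyclically ordered atomic regions. Then there exists a planar weighted graph $H$, containing boundary vertices $v_1,\ldots,v_N$, with $O(N^4)$ vertices and $O(N^4)$ edges, which solves the DBRP for the same data $S$.
   Context: Atomic boundary regions are labelled $1,\ldots,N$ and arranged cyclically in this order. A contiguous region is a nonempty proper subset of $[N]$ of the form $\{a,a+1,\ldots,a+m\}$ (indices mod $N$). Contiguous entropy data is an assignment of a real number $S(R)\ge 0$ to each contiguous region $R$ with $S(R)=S([N]\setminus R)$. A weighted graph solves the DBRP for this data if it is a finite undirected graph with nonnegative real edge weights containing distinguished boundary vertices $v_1,\ldots,v_N$ such that for every contiguous $R$, the min-cut value between $\{v_i:i\in R\}$ and $\{v_j:j\notin R\}$ (the minimum total weight of an edge set whose removal disconnects every vertex of the first set from every vertex of the second) equals $S(R)$. A bulkless graph is a solution whose only vertices are $v_1,\ldots,v_N$ (a complete graph on them with nonnegative weights). *)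

From HB Require Import structures.
From mathcomp Require Import all_boot all_order all_algebra.
From mathcomp Require Import all_classical all_reals all_analysis.
Set Implicit Arguments. Unset Strict Implicit. Unset Printing Implicit Defensive.
Import Order.TTheory GRing.Theory Num.Theory.
Import numFieldNormedType.Exports.
Local Open Scope ring_scope.

(* Cyclically ordered atomic regions are 'I_N (labels 1..N shifted to 0..N-1).
   A contiguous region: nonempty proper subset of the form {a, a+1, ..., a+m} mod N. *)
Definition contiguous (N : nat) (A : {set 'I_N}) : Prop :=
  A != finset.set0 /\ A != [set: 'I_N] /\
  exists (a : 'I_N) (m : nat),
    A = [set i : 'I_N | [exists k : 'I_m.+1, val i == ((a + k) %% N)%N]].

Definition entropy_data (R : realType) (N : nat) (S : {set 'I_N} -> R) : Prop :=
  forall A, contiguous A -> 0 <= S A /\ S A = S (~: A).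

Definition wgraph_ok (R : realType) (V : finType) (E : {set {set V}})
    (w : {set V} -> R) : Prop :=
  (forall e, e \in E -> #|e| = 2%N) /\ (forall e, e \in E -> 0 <= w e).

Definition remaining (V : finType) (E F : {set {set V}}) : rel V :=
  fun x y => [set x; y] \in E :\: F.

Definition separates (V : finType) (E F : {set {set V}}) (A B : {set V}) : Prop :=
  forall a b, a \in A -> b \in B -> ~~ connect (remaining E F) a b.

Definition is_mincut (R : realType) (V : finType) (E : {set {set V}})
    (w : {set V} -> R) (A B : {set V}) (c : R) : Prop :=
  (exists F : {set {set V}}, F \subset E /\ separates E F A B /\ \sum_(e in F) w e = c)
  /\ (forall F : {set {set V}}, F \subset E -> separates E F A B -> c <= \sum_(e in F) w e).

Definition solves_DBRP (R : realType) (N : nat) (V : finType) (E : {set {set V}})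
    (w : {set V} -> R) (vb : 'I_N -> V) (S : {set 'I_N} -> R) : Prop :=
  forall A, contiguous A -> is_mincut E w (vb @: A) (vb @: ~: A) (S A).

(* Edge set of the complete graph on the boundary vertices 'I_N (bulkless graph). *)
Definition complete_edges (N : nat) : {set {set 'I_N}} :=
  [set e : {set 'I_N} | #|e| == 2%N].

Definition planar (R : realType) (V : finType) (E : {set {set V}}) : Prop :=
  exists (pos : V -> R * R) (gam : {set V} -> R -> R * R),
    injective pos /\
    (forall e, e \in E ->
       (exists x y, e = [set x; y] /\ gam e 0 = pos x /\ gam e 1 = pos y) /\
       {within [set t : R | 0 <= t <= 1], continuous (gam e)}%classic /\
       (forall s t, 0 <= s <= 1 -> 0 <= t <= 1 -> gam e s = gam e t -> s = t) /\
       (forall t, 0 < t < 1 -> forall v, gam e t <> pos v)) /\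
    (forall e e', e \in E -> e' \in E -> e != e' ->
       forall s t, 0 < s < 1 -> 0 < t < 1 -> gam e s <> gam e' t).

From HB Require Import structures.
From mathcomp Require Import all_boot all_order all_algebra.
From mathcomp Require Import all_classical all_reals all_analysis.
From mathcomp Require Import ring lra zify.
Import Order.TTheory GRing.Theory Num.Theory.
Import numFieldNormedType.Exports.
Set Implicit Arguments. Unset Strict Implicit. Unset Printing Implicit Defensive.
Local Open Scope ring_scope.

(** Put boundary vertex [k] at the point (k, k^2) of the parabola y = x^2 and draw every
    pair {i, j} as the straight chord from (i, i^2) to (j, j^2), with weight w{i, j}.
    Cutting the chords at all their pairwise intersections gives a planar graph; its
    vertices and edges are indexed by pairs of chords, hence there are at most N^4 of each.
    In the bulkless graph the min cut of a contiguous region A is the total weight of the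
    chords with exactly one end in A: each such edge must be removed, and removing them
    suffices.  In the chord graph, A or its complement is an arc {lo, ..., hi} of the
    parabola, cut off by the line through (lo, lo^2) and (hi, hi^2).  Along a chord the side
    of that line changes at most once, so the pieces crossing the line form a cut of exactly
    this weight.  Conversely a chord is a path between its ends, so every separating edge
    set contains a piece of each chord leaving A. *)

Lemma modn_sub (N x : nat) : (N <= x < N + N)%N -> (x %% N = x - N)%N.
Proof.
move=> /andP[h1 h2]; rewrite -{1}(subnK h1) modnDr modn_small //; lia.
Qed.

Lemma mem_cyclic_run (N a m k : nat) : (a < N)%N -> (k < N)%N -> (m < N)%N ->
  [exists i : 'I_m.+1, k == ((a + i) %% N)%N] = (a <= k <= a + m)%N || (k + N <= a + m)%N.
Proof.
move=> aN kN mN; apply/existsP/idP => [[i /eqP ->]|].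
  have := ltn_ord i; case: (ltnP (a + i) N) => h iS.
    by rewrite modn_small //; lia.
  by rewrite modn_sub; lia.
case: (leqP a k) => ak h.
  exists (inord (k - a)); rewrite inordK; last by lia.
  by rewrite subnKC // modn_small.
exists (inord (k + N - a)); rewrite inordK; last by lia.
by rewrite (_ : a + _ = k + N)%N ?modnDr ?modn_small //; lia.
Qed.

Lemma contiguous_interval (N : nat) (A : {set 'I_N}) : contiguous A ->
  exists lo hi b, (lo <= hi)%N /\ forall k : 'I_N, (lo <= k <= hi)%N = (k \in A) (+) b.
Proof.
move=> [_ [AT [a [m defA]]]].
have aN := ltn_ord a.
have mN : (m.+1 < N)%N.
  rewrite ltnNge; apply: contra AT => hm; apply/eqP/setP => k; rewrite defA !inE.
  have kS : ((k + N - a) %% N < m.+1)%N by apply: leq_trans (ltn_pmod _ _) hm; lia.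
  apply/existsP; exists (inord ((k + N - a) %% N)); rewrite inordK // modnDmr.
  by rewrite (_ : a + _ = k + N)%N ?modnDr ?modn_small //; lia.
have memA (k : 'I_N) : (k \in A) = (a <= k <= a + m)%N || (k + N <= a + m)%N.
  by rewrite defA inE mem_cyclic_run // ?ltn_ord //; exact: ltnW.
case: (ltnP (a + m) N) => ham.
  exists a, (a + m)%N, false; split => [|k]; first exact: leq_addr.
  by rewrite memA addbF; move: (ltn_ord k) => kN; apply/idP/idP; lia.
exists (a + m.+1 - N)%N, a.-1, true; split => [|k]; first lia.
by rewrite memA addbT; move: (ltn_ord k) => kN; apply/idP/idP; lia.
Qed.

Definition bool_monotone d (T : porderType d) (f : T -> bool) : Prop :=
  {homo f : x y / (x <= y)%O >-> x ==> y} \/ {homo f : x y / (x <= y)%O >-> y ==> x}.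

Section MonotoneBool.
Variables (d : Order.disp_t) (T : porderType d) (f : T -> bool).
Hypothesis f_mono : bool_monotone f.

Lemma bool_monotone_between x y z : (x <= y <= z)%O -> f x = f z -> f y = f x.
Proof.
move=> /andP[xy yz] fxz; case: f_mono => hf; move: (hf _ _ xy) (hf _ _ yz);
  by rewrite -fxz; case: (f x); case: (f y).
Qed.

Lemma bool_monotone_flip_once a1 b1 a2 b2 :
  (a1 <= b1)%O -> (b1 <= a2)%O -> (a2 <= b2)%O -> f a1 != f b1 -> f a2 = f b2.
Proof.
move=> h1 h2 h3; case: f_mono => hf; move: (hf _ _ h1) (hf _ _ h2) (hf _ _ h3);
  by case: (f a1); case: (f b1); case: (f a2); case: (f b2).
Qed.

End MonotoneBool.

Lemma affine_ge0_mono (R : realDomainType) (a b : R) :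
  bool_monotone (fun x : R => 0 <= a * x + b).
Proof.
case: (leP 0 a) => ha; [left | right] => x y xy; apply/implyP.
  by have := ler_wpM2l ha xy; lra.
by have := ler_wnM2l (ltW ha) xy; lra.
Qed.

Lemma set2_eq (T : finType) (u v u' v' : T) : [set u; v] = [set u'; v'] ->
  (u = u' /\ v = v') \/ (u = v' /\ v = u').
Proof.
move=> E.
have hu : u \in [set u'; v'] by rewrite -E set21.
have hv : v \in [set u'; v'] by rewrite -E set22.
have hu' : u' \in [set u; v] by rewrite E set21.
have hv' : v' \in [set u; v] by rewrite E set22.
case: (eqVneq u u') => [eu | nu].
  subst u'; left; split => //; move: hv hv'; rewrite !inE => /orP[/eqP hv | /eqP //].
  by subst v; case/orP => /eqP.
right; move: hu; rewrite !inE (negbTE nu) /= => /eqP hu; split => //.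
by move: hu'; rewrite !inE eq_sym (negbTE nu) /= => /eqP ->.
Qed.

Lemma card2_set2 (T : finType) (e : {set T}) x y :
  #|e| = 2%N -> x \in e -> y \in e -> x != y -> e = [set x; y].
Proof.
move=> e2 xe ye xy; apply/esym/eqP; rewrite eqEcard cards2 xy e2 andbT.
by apply/fintype.subsetP => z /set2P[] ->.
Qed.

Lemma ler_sum_subset (R : numDomainType) (T : finType) (X Y : {set T}) (f : T -> R) :
  X \subset Y -> {in Y, forall e, 0 <= f e} -> \sum_(e in X) f e <= \sum_(e in Y) f e.
Proof.
move=> XY f0; rewrite [X in _ <= X](big_setID X) /= (finset.setIidPr XY) lerDl.
by apply: sumr_ge0 => e /setDP[eY _]; exact: f0.
Qed.

Section Cuts.
Variables (R : realType) (V : finType) (E : {set {set V}}).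
Implicit Types (X A B : {set V}) (C F : {set {set V}}).

Lemma remaining_sym F : symmetric (remaining E F).
Proof. by move=> x y; rewrite /remaining finset.setUC. Qed.

Definition cut_edges (X : {set V}) : {set {set V}} :=
  [set e in E | [exists x in e, exists y in e, (x \in X) && (y \notin X)]].

Lemma connect_cut_edges X x y :
  connect (remaining E (cut_edges X)) x y -> (x \in X) = (y \in X).
Proof.
apply: closed_connect => u v; rewrite /remaining !inE => /andP[+ uvE].
rewrite uvE /= => hcut; case hu: (u \in X); case hv: (v \in X) => //; case/negP: hcut.
  by apply/existsP; exists u; rewrite set21 /=; apply/existsP; exists v; rewrite set22 hu hv.
by apply/existsP; exists v; rewrite set22 /=; apply/existsP; exists u; rewrite set21 hu hv.
Qed.

Lemma separates_cut_edges X A B :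
  (forall a b, a \in A -> b \in B -> (a \in X) != (b \in X)) ->
  separates E (cut_edges X) A B.
Proof.
by move=> hX a b ha hb; apply: contra (hX a b ha hb) => /connect_cut_edges ->.
Qed.

Lemma separatesC F A B : separates E F A B -> separates E F B A.
Proof. by move=> hsep b a hb ha; rewrite (sym_connect_sym (@remaining_sym F)); exact: hsep. Qed.

Lemma separator_has_edge F A B a b : separates E F A B ->
  a \in A -> b \in B -> [set a; b] \in E -> [set a; b] \in F.
Proof.
move=> hsep ha hb hE; apply: contraNT (hsep a b ha hb) => hF.
by apply: connect1; rewrite /remaining inE hF.
Qed.

Lemma mincut_forced (w : {set V} -> R) A B C (c : R) :
  (forall e, e \in E -> 0 <= w e) -> C \subset E -> separates E C A B ->
  (forall F, F \subset E -> separates E F A B -> C \subset F) ->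
  is_mincut E w A B c -> c = \sum_(e in C) w e.
Proof.
move=> w0 CE Csep Cmin [[F [FE [Fsep <-]]] cmin]; apply/eqP; rewrite eq_le cmin //.
by rewrite ler_sum_subset ?Cmin // => e /(fintype.subsetP FE); exact: w0.
Qed.

End Cuts.

Section ParabolaChords.
Variables (R : realType) (N : nat).
Implicit Types (A : {set 'I_N}) (w : {set 'I_N} -> R).

Definition chord := ('I_N * 'I_N)%type.
Definition slope (c : chord) : R := (c.1 + c.2)%N%:R.
Definition offset (c : chord) : R := (c.1 * c.2)%N%:R.
Definition parab (k : nat) : R * R := (k%:R, k%:R ^+ 2).

Definition crossing (A : {set 'I_N}) : {set chord} :=
  [set c : chord | (c.1 < c.2)%N && ((c.1 \in A) != (c.2 \in A))].

Definition cross_weight w A : R :=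
  \sum_(c in crossing A) w [set c.1; c.2].

Lemma chord_complete (c : chord) : (c.1 < c.2)%N -> [set c.1; c.2] \in complete_edges N.
Proof.
by move=> c12; rewrite inE cards2 -(inj_eq val_inj) neq_ltn c12.
Qed.

Lemma sum_cut_complete w A :
  \sum_(e in cut_edges (complete_edges N) A) w e = cross_weight w A.
Proof.
have inj : {in crossing A &, injective (fun c : chord => [set c.1; c.2])}.
  move=> [i j] [i' j']; rewrite !inE /= => /andP[ij _] /andP[ij' _].
  case/set2_eq => [[-> ->] // | [ii' jj']].
  by move: ij'; rewrite -jj' -ii' => /(ltn_trans ij); rewrite ltnn.
suff -> : cut_edges (complete_edges N) A = [set [set c.1; c.2] | c in crossing A].
  by rewrite big_imset.
apply/setP => e.
rewrite /cut_edges !inE; apply/andP/imsetP => [[e2] | ].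
  case/existsP => x /andP[xe /existsP[y /and3P[ye xA yA]]].
  have xy : x != y by apply: contraNneq yA => <-.
  rewrite (card2_set2 (eqP e2) xe ye xy).
  case: (ltngtP x y) => [xy' | yx' | /val_inj exy]; last by rewrite exy eqxx in xy.
    by exists (x, y); first rewrite inE /= xy' xA.
  exists (y, x); last exact: finset.setUC.
  by rewrite inE /= yx'; case: (x \in A) (y \in A) xA yA => [] [].
move=> [c cD ->]; move: cD; rewrite inE => /andP[c12 cA].
split; first by move: (chord_complete c12); rewrite inE.
case hA: (c.1 \in A) in cA.
  apply/existsP; exists c.1; rewrite set21 /=; apply/existsP; exists c.2.
  by rewrite set22 hA; case: (c.2 \in A) cA.
apply/existsP; exists c.2; rewrite set22 /=; apply/existsP; exists c.1.
by rewrite set21 hA; case: (c.2 \in A) cA.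
Qed.

Lemma complete_mincut w (S : {set 'I_N} -> R) A :
  wgraph_ok (complete_edges N) w ->
  is_mincut (complete_edges N) w (id @: A) (id @: ~: A) (S A) -> S A = cross_weight w A.
Proof.
move=> [_ w0]; rewrite !imset_id -sum_cut_complete; apply: mincut_forced => //.
- by apply/fintype.subsetP => e; rewrite inE => /andP[].
- by apply: separates_cut_edges => a b aA; rewrite inE aA => /negbTE ->.
move=> F _ Fsep; apply/fintype.subsetP => e; rewrite inE.
case/andP => /[dup] eE; rewrite inE => /eqP e2.
case/existsP => x /andP[xe /existsP[y /and3P[ye xA yA]]].
have xy : x != y by apply: contraNneq yA => <-.
by rewrite (card2_set2 e2 xe ye xy) in eE *; apply: separator_has_edge Fsep _ _ eE; rewrite ?inE.
Qed.

(** * The chord graph *)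

(* The intersection of the lines carrying [c] and [d].  The junk value for parallel lines
   makes each boundary point [parab k = meet (k, k) (k, k)] a vertex. *)
Definition meet (c d : chord) : R * R :=
  if slope c == slope d then parab c.1 else
  let x := (offset c - offset d) / (slope c - slope d) in (x, slope c * x - offset c).

Definition points : seq (R * R) :=
  undup [seq meet cd.1 cd.2 | cd <- enum {: chord * chord}].
Definition vertex := seq_sub points.
Definition pos (v : vertex) : R * R := ssval v.

Implicit Types (c d : chord) (u v y z : vertex) (P Q : R * R).
Implicit Types (e : {set vertex}) (F : {set {set vertex}}).

Lemma meet_in c d : meet c d \in points.
Proof. by rewrite mem_undup; apply/mapP; exists (c, d); rewrite ?mem_enum. Qed.

Definition vtx (c d : chord) : vertex := SeqSub (meet_in c d).
Definition bvert (k : 'I_N) : vertex := vtx (k, k) (k, k).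

(* Inside the parabola, the line of [c] is exactly the segment between its ends. *)
Definition on_chord (c : chord) (P : R * R) : bool :=
  (P.2 == slope c * P.1 - offset c) && (P.1 ^+ 2 <= P.2).

Definition consecutive (c : chord) (u v : vertex) : bool :=
  [&& on_chord c (pos u), on_chord c (pos v), (pos u).1 < (pos v).1 &
   [forall z, on_chord c (pos z) ==> ~~ ((pos u).1 < (pos z).1 < (pos v).1)]].

(* The piece of chord [k.1] that starts at its intersection with chord [k.2]. *)
Definition piece (k : chord * chord) : {set vertex} :=
  if [pick v | consecutive k.1 (vtx k.1 k.2) v] is Some v then [set vtx k.1 k.2; v]
  else finset.set0.

Definition edges : {set {set vertex}} := [set piece k | k : chord * chord] :\ finset.set0.

Definition piece_of (c : chord) (e : {set vertex}) : bool :=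
  [exists uv : vertex * vertex, (e == [set uv.1; uv.2]) && consecutive c uv.1 uv.2].

Definition weight w (e : {set vertex}) : R :=
  \sum_(c : chord | (c.1 < c.2)%N && piece_of c e) w [set c.1; c.2].

Lemma pos_inj : injective pos.
Proof. exact: val_inj. Qed.

Lemma pos_bvert k : pos (bvert k) = parab k.
Proof. by rewrite /pos /= /meet eqxx. Qed.

Lemma bvert_inj : injective bvert.
Proof.
move=> k l /(congr1 pos); rewrite !pos_bvert => -[/eqP]; rewrite eqr_nat => /eqP kl _.
exact: val_inj.
Qed.

Lemma card_vertex : (#|{: vertex}| <= N ^ 4)%N.
Proof.
rewrite card_seq_sub ?undup_uniq //; apply: leq_trans (size_undup _) _.
by rewrite size_map -cardE !card_prod card_ord; lia.
Qed.

Lemma card_edges : (#|edges| <= N ^ 4)%N.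
Proof.
apply: leq_trans (subset_leq_card (subsetDl _ _)) _; apply: leq_trans (leq_imset_card _ _) _.
by rewrite !card_prod card_ord; lia.
Qed.

Lemma on_chord_parab1 c : on_chord c (parab c.1).
Proof. by rewrite /on_chord /slope /offset /= natrD natrM lexx andbT; apply/eqP; ring. Qed.

Lemma on_chord_parab2 c : on_chord c (parab c.2).
Proof. by rewrite /on_chord /slope /offset /= natrD natrM lexx andbT; apply/eqP; ring. Qed.

Lemma on_chord_parabP c (k : nat) : on_chord c (parab k) ->
  k = c.1 \/ k = c.2.
Proof.
rewrite /on_chord /slope /offset /= natrD natrM => /andP[/eqP h _].
have : (k%:R - c.1%:R) * (k%:R - c.2%:R) == 0 :> R.
  by apply/eqP; rewrite -[RHS](subrr (k%:R ^+ 2)) {2}h; ring.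
by rewrite mulf_eq0 !subr_eq0 !eqr_nat => /orP[] /eqP; [left | right].
Qed.

Lemma on_chord_range (c : chord) P : (c.1 <= c.2)%N -> on_chord c P ->
  c.1%:R <= P.1 <= c.2%:R.
Proof.
move=> c12 /andP[/eqP h2 h]; rewrite h2 /slope /offset natrD natrM in h.
have : c.1%:R <= c.2%:R :> R by rewrite ler_nat.
move: h; set i : R := c.1%:R; set j : R := c.2%:R => h ij.
apply/andP; split; nra.
Qed.

Lemma on_chord_abscissa c P Q : on_chord c P -> on_chord c Q -> P.1 = Q.1 -> P = Q.
Proof.
case: P Q => [p1 p2] [q1 q2] /andP[/eqP /= hp _] /andP[/eqP /= hq _] /= e.
by rewrite hp hq e.
Qed.

Lemma meet_lines c d (P : R * R) : slope c != slope d ->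
  P.2 = slope c * P.1 - offset c -> P.2 = slope d * P.1 - offset d -> P = meet c d.
Proof.
move=> cd; case: P => [p1 p2] /= hc hd; rewrite /meet (negbTE cd) hc.
suff -> : p1 = (offset c - offset d) / (slope c - slope d) by [].
have cd0 : slope c - slope d != 0 by rewrite subr_eq0.
by rewrite -[p1](mulfK cd0); congr (_ / _); lra.
Qed.

Lemma vertex_on_chord c y : (c.1 < c.2)%N -> on_chord c (pos y) ->
  (pos y).1 < c.2%:R -> exists d, y = vtx c d.
Proof.
move=> c12 yc yx; suff [d yd] : exists d, pos y = meet c d by exists d; apply: pos_inj.
have /[!mem_undup] /mapP[[d1 d2] _ /= yd] := ssvalP y; rewrite -/(pos y) in yd.
case: (eqVneq (slope d1) (slope d2)) => [d12 | d12].
  move: yc yx; rewrite yd /meet d12 eqxx => /on_chord_parabP[] -> yx.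
    by exists c; rewrite /meet eqxx.
  by rewrite ltxx in yx.
have l1 : (pos y).2 = slope d1 * (pos y).1 - offset d1 by rewrite yd /meet (negbTE d12).
have l2 : (pos y).2 = slope d2 * (pos y).1 - offset d2.
  have d12' : slope d1 - slope d2 != 0 by rewrite subr_eq0.
  by rewrite yd /meet (negbTE d12) /=; field; move: d12'; rewrite /slope !natrD.
have /andP[/eqP lc _] := yc.
case: (eqVneq (slope c) (slope d1)) => [cd1 | cd1].
  by exists d2; apply: meet_lines => //; rewrite cd1.
by exists d1; apply: meet_lines.
Qed.

Lemma consecutive_uniqr c u v v' : consecutive c u v -> consecutive c u v' -> v = v'.
Proof.
move=> /and4P[_ hv huv /forallP hz] /and4P[_ hv' huv' /forallP hz'].
apply/pos_inj/(on_chord_abscissa hv hv').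
case: (ltgtP (pos v).1 (pos v').1) => // hlt.
- by move: (hz' v); rewrite hv huv hlt.
- by move: (hz v'); rewrite hv' huv' hlt.
Qed.

Lemma edgesP e : e \in edges -> exists c u v, e = [set u; v] /\ consecutive c u v.
Proof.
rewrite !inE => /andP[e0 /imsetP[k _ ek]]; move: e0; rewrite ek /piece.
by case: pickP => [v /= kv _ | _]; [exists k.1, (vtx k.1 k.2), v | rewrite eqxx].
Qed.

Lemma consecutive_edge c y z : (c.1 < c.2)%N -> consecutive c y z -> [set y; z] \in edges.
Proof.
move=> c12 yz; have /and4P[yc zc y_z _] := yz.
have [d yd] : exists d, y = vtx c d.
  apply: vertex_on_chord yc _ => //; apply: lt_le_trans y_z _.
  by case/andP: (on_chord_range (ltnW c12) zc).
subst y.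
rewrite !inE; apply/andP; split.
  by apply/eqP => /setP /(_ (vtx c d)); rewrite !inE eqxx.
apply/imsetP; exists (c, d) => //; rewrite /piece /=.
case: pickP => [v /= /consecutive_uniqr /(_ yz) -> // | /(_ z)].
by rewrite yz.
Qed.

Definition left_of c z : {set vertex} :=
  [set y | on_chord c (pos y) && ((pos y).1 < (pos z).1)].

Lemma left_of_eq0 c z : (c.1 <= c.2)%N -> on_chord c (pos z) -> left_of c z = finset.set0 ->
  z = bvert c.1.
Proof.
move=> c12 zc z0; apply/pos_inj/(on_chord_abscissa zc).
  by rewrite pos_bvert on_chord_parab1.
have /andP[c1z _] := on_chord_range c12 zc.
have : ~~ (c.1%:R < (pos z).1).
  apply/negP => c1_z; have : bvert c.1 \in left_of c z.
    by rewrite /left_of inE pos_bvert on_chord_parab1.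
  by rewrite z0 inE.
by rewrite -leNgt pos_bvert => zc1; apply/eqP; rewrite eq_le zc1.
Qed.

Lemma consecutive_pred c y0 z : on_chord c (pos z) -> y0 \in left_of c z ->
  exists2 y, consecutive c y z & left_of c y \proper left_of c z.
Proof.
move=> zc y0z; have [y yz ymax] := arg_maxP (fun y => (pos y).1) y0z.
have : y \in left_of c z := yz.
rewrite /left_of inE => /andP[yc y_z]; exists y.
  rewrite /consecutive yc zc y_z; apply/forallP => x; apply/implyP => xc.
  rewrite negb_and -!leNgt; apply/orP; case: (ltP (pos x).1 (pos z).1) => x_z.
    have xb : x \in left_of c z by rewrite /left_of inE xc x_z.
    by left; exact: ymax xb.
  by right.
apply/properP; split; last by exists y; rewrite // /left_of inE ltxx andbF.
by apply/fintype.subsetP => x; rewrite /left_of !inE => /andP[-> /lt_trans]; apply.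
Qed.

Lemma connect_along_chord c F : (c.1 < c.2)%N -> (forall e, e \in F -> ~~ piece_of c e) ->
  forall z, on_chord c (pos z) -> connect (remaining edges F) (bvert c.1) z.
Proof.
move=> c12 Fc z; move: {2}#|left_of c z| (leqnn #|left_of c z|) => n.
elim: n z => [|n IH] z zn zc.
  by rewrite (left_of_eq0 (ltnW c12) zc) //; apply/cards0_eq/eqP; rewrite -leqn0.
case: (set_0Vmem (left_of c z)) => [z0 | [y0 y0z]].
  by rewrite (left_of_eq0 (ltnW c12) zc).
have [y yz yz_sub] := consecutive_pred zc y0z.
apply: connect_trans (IH y _ _) _.
- by rewrite -ltnS; apply: leq_trans (proper_card yz_sub) zn.
- by case/and4P: yz.
apply: connect1; rewrite /remaining inE (consecutive_edge c12 yz) andbT.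
by apply/negP => /Fc /negP; apply; apply/existsP; exists (y, z); rewrite eqxx.
Qed.

Lemma separator_cuts_chord c F : (c.1 < c.2)%N ->
  ~~ connect (remaining edges F) (bvert c.1) (bvert c.2) ->
  (0 < #|[set e in F | piece_of c e]|)%N.
Proof.
move=> c12; rewrite card_gt0; apply: contraNneq => F0.
apply: connect_along_chord c12 _ _ _; last by rewrite pos_bvert on_chord_parab2.
by move=> e eF; apply/negP => ce; move/setP: F0 => /(_ e); rewrite !inE eF ce.
Qed.

(** * Planarity *)

Definition lerp P Q (t : R) : R * R :=
  (P.1 + t * (Q.1 - P.1), P.2 + t * (Q.2 - P.2)).

Lemma lerp_continuous P Q : continuous (lerp P Q).
Proof.
move=> t; have affine_cvg (a b : R) : ((fun t => a + t * b) @ t --> a + t * b)%classic.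
  by apply: cvgD; [exact: cvg_cst | apply: cvgMl; exact: cvg_id].
exact: (cvg_pair (affine_cvg _ _) (affine_cvg _ _)).
Qed.

Lemma on_chord_lerp c P Q t : on_chord c P -> on_chord c Q -> 0 <= t <= 1 ->
  on_chord c (lerp P Q t).
Proof.
case: P Q => [p1 p2] [q1 q2] /andP[/eqP /= hp hp'] /andP[/eqP /= hq hq'] /andP[t0 t1].
apply/andP; split => /=; first by apply/eqP; rewrite hp hq; ring.
have : 0 <= t * (1 - t) * (q1 - p1) ^+ 2.
  by rewrite mulr_ge0 ?sqr_ge0 // mulr_ge0 // subr_ge0.
nra.
Qed.

Lemma lerp_interior c u v t : consecutive c u v -> 0 < t < 1 ->
  on_chord c (lerp (pos u) (pos v) t) /\
  (pos u).1 < (lerp (pos u) (pos v) t).1 < (pos v).1.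
Proof.
move=> /and4P[uc vc uv _] /andP[t0 t1]; split.
  by apply: on_chord_lerp => //; rewrite !ltW.
rewrite /lerp /=; apply/andP; split; nra.
Qed.

Lemma lerp_interior_vertex c u v t z : consecutive c u v -> 0 < t < 1 ->
  lerp (pos u) (pos v) t <> pos z.
Proof.
move=> uv t01 uvz; have [zc zin] := lerp_interior uv t01.
by move: uv => /and4P[_ _ _ /forallP /(_ z)]; rewrite -uvz zc zin.
Qed.

Definition arc e : R -> R * R :=
  if [pick uv : vertex * vertex | (e == [set uv.1; uv.2]) && ((pos uv.1).1 < (pos uv.2).1)]
    is Some uv then lerp (pos uv.1) (pos uv.2) else fun=> (0, 0).

Lemma arcE e : e \in edges -> exists c u v,
  [/\ e = [set u; v], consecutive c u v & arc e = lerp (pos u) (pos v)].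
Proof.
move=> /edgesP [c [u [v [-> uv]]]]; exists c, u, v; split => //.
have /and4P[_ _ u_v _] := uv.
rewrite /arc; case: pickP => [[u' v'] /= /andP[/eqP /set2_eq] | /(_ (u, v))].
  by case=> [[<- <-] // | [uv' vu']]; rewrite -uv' -vu' ltNge ltW.
by rewrite /= eqxx u_v.
Qed.

Lemma interiors_disjoint c c' u v u' v' s t :
  consecutive c u v -> consecutive c' u' v' -> [set u; v] != [set u'; v'] ->
  0 < s < 1 -> 0 < t < 1 -> lerp (pos u) (pos v) s <> lerp (pos u') (pos v') t.
Proof.
move=> uv uv' ne s01 t01 eP.
have [Pc /andP[u_P P_v]] := lerp_interior uv s01.
have [Pc' /andP[u_P' P_v']] := lerp_interior uv' t01.
rewrite -eP in Pc' u_P' P_v'; set P := lerp _ _ s in eP Pc Pc' u_P P_v u_P' P_v'.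
move: (Pc) (Pc') => /andP[/eqP l _] /andP[/eqP l' _].
case: (eqVneq (slope c) (slope c')) => [cc' | cc']; last first.
  by apply: (lerp_interior_vertex (z := vtx c c') uv s01); exact: meet_lines cc' l l'.
have oc : offset c = offset c' by move: l l'; rewrite cc'; lra.
have uv'c : consecutive c u' v' by rewrite /consecutive /on_chord cc' oc.
move: (uv) (uv'c) => /and4P[uc _ _ /forallP zuv] /and4P[uc' _ _ /forallP zuv'].
case: (ltgtP (pos u).1 (pos u').1) => uu'.
- by move: (zuv u'); rewrite uc' uu' (lt_trans u_P' P_v).
- by move: (zuv' u); rewrite uc uu' (lt_trans u_P P_v').
have eu : u = u' by apply/pos_inj/(on_chord_abscissa uc uc' uu').
by subst u'; move: ne; rewrite (consecutive_uniqr uv uv'c) eqxx.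
Qed.

Lemma edges_planar : planar R edges.
Proof.
exists pos, arc; split; first exact: pos_inj.
split => [e /arcE [c [u [v [-> uv ->]]]] | e e' /arcE [c [u [v [-> uv ->]]]]].
  have /and4P[_ _ u_v _] := uv.
  split.
    exists u, v; split; [by [] | split; rewrite /lerp].
      by rewrite !mul0r !addr0; case: (pos u).
    by rewrite !mul1r !subrKC; case: (pos v).
  split; first exact/continuous_subspaceT/lerp_continuous.
  split; last by move=> t t01 z; exact: lerp_interior_vertex uv t01.
  by move=> s t _ _ [/addrI /mulIf + _]; apply; rewrite subr_eq0 gt_eqF.
move=> /arcE [c' [u' [v' [e'E uv' ->]]]]; rewrite e'E => ne s t s01 t01.
exact: interiors_disjoint uv uv' ne s01 t01.
Qed.

(** * Min cuts *)

Definition under (lo hi : nat) : {set vertex} :=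
  [set z | (pos z).2 <= (lo + hi)%N%:R * (pos z).1 - (lo * hi)%N%:R].

Lemma bvert_under lo hi k : (lo <= hi)%N -> (bvert k \in under lo hi) = (lo <= k <= hi)%N.
Proof.
move=> lohi; rewrite inE pos_bvert /= -subr_ge0 natrD natrM.
have -> : (lo%:R + hi%:R) * k%:R - lo%:R * hi%:R - k%:R ^+ 2 =
          (k%:R - lo%:R) * (hi%:R - k%:R) :> R by ring.
case: (leqP lo k) => lok; case: (leqP k hi) => khi /=.
- by rewrite mulr_ge0 // subr_ge0 ler_nat.
- by apply/negbTE; rewrite -ltNge pmulr_rlt0 ?subr_gt0 ?subr_lt0 ?ltr_nat // (leq_ltn_trans lohi).
- by apply/negbTE; rewrite -ltNge pmulr_llt0 ?subr_gt0 ?subr_lt0 ?ltr_nat // (leq_trans lok).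
- by move: (leq_trans khi (leq_trans (ltnW lok) lohi)); rewrite ltnn.
Qed.

Lemma under_along_chord lo hi c : exists2 f : R -> bool, bool_monotone f &
  forall z, on_chord c (pos z) -> (z \in under lo hi) = f (pos z).1.
Proof.
exists (fun x => 0 <= ((lo + hi)%N%:R - slope c) * x + (offset c - (lo * hi)%N%:R)).
  exact: affine_ge0_mono.
by move=> z /andP[/eqP zc _]; rewrite inE zc -subr_ge0; congr (0 <= _); ring.
Qed.

Lemma cut_pieceP X c e : e \in cut_edges edges X -> piece_of c e ->
  exists u v, [/\ e = [set u; v], consecutive c u v & (u \in X) != (v \in X)].
Proof.
rewrite inE => /andP[_ /existsP[x /andP[xe /existsP[y /and3P[ye xX yX]]]]].
move=> /existsP[[u v] /andP[/eqP euv uv]]; exists u, v; split => //.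
apply: contraNneq yX => uvX; move: xe ye xX; rewrite euv !inE.
by case/orP => /eqP ->; case/orP => /eqP ->; rewrite ?uvX.
Qed.

Lemma cut_pieces_eq0 lo hi c : (c.1 <= c.2)%N ->
  (bvert c.1 \in under lo hi) = (bvert c.2 \in under lo hi) ->
  [set e in cut_edges edges (under lo hi) | piece_of c e] = finset.set0.
Proof.
move=> c12; have [f f_mono onX] := under_along_chord lo hi c.
rewrite !onX ?pos_bvert ?on_chord_parab1 ?on_chord_parab2 //= => same.
apply/setP => e; rewrite [RHS]inE; apply/negbTE/negP.
move=> /finset.setIdP[/cut_pieceP cut /cut [u [v [_ /and4P[uc vc _ _]]]]]; apply/negP.
by rewrite !onX // (bool_monotone_between f_mono (on_chord_range c12 uc) same)
                   (bool_monotone_between f_mono (on_chord_range c12 vc) same) eqxx.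
Qed.

Lemma card_cut_pieces_le1 lo hi c :
  (#|[set e in cut_edges edges (under lo hi) | piece_of c e]| <= 1)%N.
Proof.
have [f f_mono onX] := under_along_chord lo hi c.
apply/card_le1_eqP => e1 e2.
move=> /finset.setIdP[/cut_pieceP cut1 /cut1 [u1 [v1 [-> uv1 X1]]]].
move=> /finset.setIdP[/cut_pieceP cut2 /cut2 [u2 [v2 [-> uv2 X2]]]].
have /and4P[uc1 vc1 u_v1 /forallP betw1] := uv1.
have /and4P[uc2 vc2 u_v2 /forallP betw2] := uv2.
rewrite !onX // in X1 X2.
case: (ltgtP (pos u1).1 (pos u2).1) => u12.
- have v1u2 : (pos v1).1 <= (pos u2).1 by move: (betw1 u2); rewrite uc2 u12 -leNgt.
  by move: X2; rewrite (bool_monotone_flip_once f_mono (ltW u_v1) v1u2 (ltW u_v2) X1) eqxx.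
- have v2u1 : (pos v2).1 <= (pos u1).1 by move: (betw2 u1); rewrite uc1 u12 -leNgt.
  by move: X1; rewrite (bool_monotone_flip_once f_mono (ltW u_v2) v2u1 (ltW u_v1) X2) eqxx.
have eu : u1 = u2 by apply/pos_inj/(on_chord_abscissa uc1 uc2 u12).
by subst u2; rewrite (consecutive_uniqr uv1 uv2).
Qed.

Lemma card_cut_pieces lo hi c : (c.1 < c.2)%N ->
  #|[set e in cut_edges edges (under lo hi) | piece_of c e]| =
  ((bvert c.1 \in under lo hi) != (bvert c.2 \in under lo hi)).
Proof.
move=> c12; case: eqVneq => [same | differ] /=.
  by rewrite cut_pieces_eq0 ?cards0 // ltnW.
apply/eqP; rewrite eqn_leq card_cut_pieces_le1 separator_cuts_chord //.
by apply: contra differ => /connect_cut_edges ->.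
Qed.

Lemma sum_weight w F : \sum_(e in F) weight w e =
  \sum_(c : chord | (c.1 < c.2)%N) w [set c.1; c.2] *+ #|[set e in F | piece_of c e]|.
Proof.
rewrite /weight; under eq_bigr do rewrite big_mkcondr.
rewrite exchange_big /=; apply: eq_bigr => c _.
by rewrite -big_mkcondr -sumr_const; apply: eq_bigl => e; rewrite inE.
Qed.

Lemma planar_mincut w A lo hi b :
  (forall c : chord, (c.1 < c.2)%N -> 0 <= w [set c.1; c.2]) -> (lo <= hi)%N ->
  (forall k : 'I_N, (lo <= k <= hi)%N = (k \in A) (+) b) ->
  is_mincut edges (weight w) (bvert @: A) (bvert @: ~: A) (cross_weight w A).
Proof.
move=> w0 lohi hA.
have crossE (c : chord) : (c \in crossing A) =
    (c.1 < c.2)%N && ((bvert c.1 \in under lo hi) != (bvert c.2 \in under lo hi)).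
  by rewrite inE !bvert_under // !hA {hA}; case: b; case: (c.1 \in A); case: (c.2 \in A).
rewrite /cross_weight (eq_bigl _ _ crossE) big_mkcondr /=.
split.
  exists (cut_edges edges (under lo hi)); split.
    by apply/fintype.subsetP => e /finset.setIdP[].
  split.
    apply: separates_cut_edges => _ _ /imsetP[i iA ->] /imsetP[j jA ->].
    by rewrite !bvert_under // !hA {hA} iA; move: jA; rewrite inE => /negbTE ->; case: b.
  rewrite sum_weight; apply: eq_bigr => c c12.
  by rewrite card_cut_pieces //; case: (_ != _); rewrite ?mulr1n ?mulr0n.
move=> F _ Fsep; rewrite sum_weight; apply: ler_sum => c c12.
case: ifP => cross; last exact: mulrn_wge0 (w0 _ c12).
have : (0 < #|[set e in F | piece_of c e]|)%N.
  apply: separator_cuts_chord => //.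
  move: cross; rewrite !bvert_under // !hA {hA}.
  case c1A: (c.1 \in A); case c2A: (c.2 \in A); case: b => //= _;
    [apply: Fsep | apply: Fsep | apply: (separatesC Fsep) | apply: (separatesC Fsep)];
    by apply: imset_f; rewrite ?inE ?c1A ?c2A.
by case: #|_| => // n _; rewrite mulrS lerDl mulrn_wge0 ?w0.
Qed.

Lemma wgraph_edges w : wgraph_ok (complete_edges N) w -> wgraph_ok edges (weight w).
Proof.
move=> [_ w0]; split => [e /edgesP [c [u [v [-> /and4P[_ _ u_v _]]]]] | e _].
  by rewrite cards2 (contraTneq _ u_v) // => ->; rewrite ltxx.
by apply: sumr_ge0 => c /andP[c12 _]; exact/w0/chord_complete.
Qed.

End ParabolaChords.

Theorem lemma2 (R : realType) :
  exists C : nat,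
  forall (N : nat) (S : {set 'I_N} -> R),
    (2 <= N)%N ->
    entropy_data S ->
    forall w : {set 'I_N} -> R,
      wgraph_ok (complete_edges N) w ->
      solves_DBRP (complete_edges N) w id S ->
      exists (V : finType) (E : {set {set V}}) (w' : {set V} -> R) (vb : 'I_N -> V),
        wgraph_ok E w' /\ injective vb /\ planar R E /\
        (#|V| <= C * N ^ 4)%N /\ (#|E| <= C * N ^ 4)%N /\
        solves_DBRP E w' vb S.
Proof.
exists 1%N => N S _ _ w hw hsol.
exists (vertex R N), (edges R N), (weight w), (@bvert R N).
split; first exact: wgraph_edges.
split; first exact: bvert_inj.
split; first exact: edges_planar.
rewrite !mul1n; split; first exact: card_vertex.
split; first exact: card_edges.
move=> A hA; have [lo [hi [b [lohi hAb]]]] := contiguous_interval hA.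
rewrite (complete_mincut hw (hsol A hA)).
by apply: planar_mincut lohi hAb => c c12; exact/hw.2/chord_complete.
Qed.
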